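(* Let $\mathcal{H}$ be a separable Hilbert space, let $J$ be a finite or countably infinite index set, and let $(\rho_j)_{j\in J}$ be density operators on $\mathcal{H}$. Let $f:(0,1]^J\to\mathbb{R}$ be an evaluation function for uniform discrimination (defined in the context). Suppose the instrument $(\mathcal{I}_\omega)_{\omega\in J\cup\{?\}}$ is a uniform unambiguous discrimination measurement between $(\rho_j)_{j\in J}$ that is optimal with respect to $f$, and suppose that $\sup\{\operatorname{tr}[\mathcal{I}_j\rho_j]\mid j\in J\}<1$. Then the states $$\left(\frac{\mathcal{I}_?\rho_j}{\operatorname{tr}[\mathcal{I}_?\rho_j]}\right)_{j\in J}$$ (the post-measurement states conditioned on the inconclusive outcome $?$) are not uniformly distinguishable.
   Context: States are density operators $\rho$ on $\mathcal{H}$: trace-class operators with $\rho\geq 0$ and $\operatorname{tr}\rho=1$; $\mathfrak{T}(\mathcal{H})$ denotes the Banach space of trace-class operators. An instrument with countable outcome set $\Omega$ is a family $(\mathcal{I}_\omega)_{\omega\in\Omega}$ of trace-norm-bounded linear maps $\mathcal{I}_\omega:\mathfrak{T}(\mathcal{H})\to\mathfrak{T}(\mathcal{H})$ such that each $\mathcal{I}_\omega$ is completely positive (i.e. $\mathcal{I}_\omega\otimes\mathrm{id}_{\mathbb{C}^{n\times n}}$ is positive for all $n\in\mathbb{N}$) and $\operatorname{tr}[(\sum_\omega\mathcal{I}_\omega)\rho]=\operatorname{tr}\rho$ for all $\rho\in\mathfrak{T}(\mathcal{H})$. A uniform unambiguous discrimination measurement between states $(\rho_j)_{j\in J}$ is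 an instrument $(\mathcal{I}_\omega)_{\omega\in J\cup\{?\}}$ (with $?$ an extra ''inconclusive'' outcome not in $J$) such that $\operatorname{tr}[\mathcal{I}_j\rho_k]=0$ for all $j\neq k$ in $J$, and $\inf\{\operatorname{tr}[\mathcal{I}_j\rho_j]\mid j\in J\}>0$. States $(\rho_j)_{j\in J}$ are uniformly distinguishable if at least one uniform unambiguous discrimination measurement between them exists. An evaluation function for uniform discrimination is a function $f:(0,1]^J\to\mathbb{R}$ such that for all $(x_j),(y_j)\in(0,1]^J$, if $\inf\{x_j-y_j\mid j\in J\}>0$ then $f((x_j))-f((y_j))>0$. A uniform unambiguous discrimination measurement between $(\rho_j)_{j\in J}$ is optimal with respect to $f$ if no other uniform unambiguous discrimination measurement $(\mathcal{I}'_\omega)$ between $(\rho_j)_{j\in J}$ satisfies $f((\operatorname{tr}[\mathcal{I}'_j\rho_j])_j)>f((\operatorname{tr}[\mathcal{I}_j\rho_j])_j)$. *)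

From mathcomp Require Import all_boot all_order all_algebra.
From mathcomp Require Import all_classical all_reals all_analysis.
From mathcomp Require Export complex.
Import Order.TTheory GRing.Theory Num.Theory.
Import numFieldNormedType.Exports.
Set Implicit Arguments. Unset Strict Implicit. Unset Printing Implicit Defensive.
Local Open Scope classical_set_scope.
Local Open Scope ring_scope.

Section QuantumDefs.
Variable R : realType.
Local Notation C := R[i].

Definition cabs (z : C) : R :=
  Num.sqrt (complex.Re z ^+ 2 + complex.Im z ^+ 2).

Definition rseries_to (u : nat -> R) (s : R) : Prop :=
  (fun N => \sum_(0 <= n < N) u n) @ \oo --> s.
Definition rsum (u : nat -> R) : R := limn (fun N => \sum_(0 <= n < N) u n).

Definition cseries_to (a : nat -> C) (s : C) : Prop :=
  rseries_to (fun n => complex.Re (a n)) (complex.Re s) /\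
  rseries_to (fun n => complex.Im (a n)) (complex.Im s).
Definition csum (a : nat -> C) : C :=
  Complex (rsum (fun n => complex.Re (a n))) (rsum (fun n => complex.Im (a n))).
Definition cabs_summable (a : nat -> C) : Prop :=
  exists M : R, forall N, \sum_(0 <= n < N) cabs (a n) <= M.

(* Every separable Hilbert space is unitarily isomorphic to l^2(K) with
   K = {0,..,d-1} (d = its dimension) or K = nat. *)
Definition vec := nat -> C.

Definition in_l2 (K : set nat) (v : vec) : Prop :=
  (forall i, ~ K i -> v i = 0) /\
  exists M : R, forall N, \sum_(0 <= i < N) cabs (v i) ^+ 2 <= M.

Definition l2norm (v : vec) : R := Num.sqrt (rsum (fun i => cabs (v i) ^+ 2)).

Definition mat := nat -> nat -> C.

(* A = sum_n |x_n><y_n| with sum_n ||x_n|| ||y_n|| < oo (nuclear representation) *)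
Definition nuclear_rep (K : set nat) (A : mat) (x y : nat -> vec) : Prop :=
  (forall n, in_l2 K (x n)) /\ (forall n, in_l2 K (y n)) /\
  (exists M : R, forall N, \sum_(0 <= n < N) l2norm (x n) * l2norm (y n) <= M) /\
  (forall i j, cseries_to (fun n => x n i * conjc (y n j)) (A i j)).

Definition trace_class (K : set nat) (A : mat) : Prop :=
  exists x y, nuclear_rep K A x y.

Definition trace_norm (K : set nat) (A : mat) : R :=
  inf [set t : R | exists x y, nuclear_rep K A x y /\
                    t = rsum (fun n => l2norm (x n) * l2norm (y n))].

Definition tr (A : mat) : C := csum (fun i => A i i).

(* positivity <v, A v> >= 0, tested on the dense set of finitely supported v *)
Definition positive_op (A : mat) : Prop :=
  forall (N : nat) (v : vec),
    0 <= \sum_(0 <= i < N) \sum_(0 <= j < N) conjc (v i) * A i j * v j.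

Definition density (K : set nat) (rho : mat) : Prop :=
  trace_class K rho /\ positive_op rho /\ tr rho = 1.

Definition opscale (c : C) (A : mat) : mat := fun i j => c * A i j.
Definition opadd (A B : mat) : mat := fun i j => A i j + B i j.

Definition op := mat -> mat.

(* T(H (x) C^n) = n x n block matrices with trace-class blocks;
   positivity of such a block operator *)
Definition positive_block (n : nat) (B : 'I_n -> 'I_n -> mat) : Prop :=
  forall (N : nat) (v : 'I_n -> vec),
    0 <= \sum_(a < n) \sum_(b < n) \sum_(0 <= i < N) \sum_(0 <= j < N)
            conjc (v a i) * B a b i j * v b j.

(* I (x) id_{C^{n x n}} is positive for every n *)
Definition completely_positive (K : set nat) (I : op) : Prop :=
  forall (n : nat) (B : 'I_n -> 'I_n -> mat),
    (forall a b, trace_class K (B a b)) ->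
    positive_block B -> positive_block (fun a b => I (B a b)).

Definition bounded_cp_map (K : set nat) (I : op) : Prop :=
  (forall A, trace_class K A -> trace_class K (I A)) /\
  (forall A B, trace_class K A -> trace_class K B ->
     I (opadd A B) = opadd (I A) (I B)) /\
  (forall (c : C) A, trace_class K A -> I (opscale c A) = opscale c (I A)) /\
  (exists c : R, forall A, trace_class K A ->
     trace_norm K (I A) <= c * trace_norm K (A)) /\
  completely_positive K I.

(* sum over a countable type, enumerated injectively through pickle *)
Definition enum_seq (W : countType) (g : W -> C) : nat -> C :=
  fun n => match (@pickle_inv W n) with Some w => g w | None => 0 end.

(* instrument with countable outcome set W:
   tr[(sum_w I_w) rho] = tr rho for every rho in T(H), the sum over W
   converging (absolutely, i.e. unconditionally) *)
Definition instrument (K : set nat) (W : countType) (I : W -> op) : Prop :=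
  (forall w, bounded_cp_map K (I w)) /\
  (forall rho, trace_class K rho ->
     cabs_summable (enum_seq (fun w => tr (I w rho))) /\
     cseries_to (enum_seq (fun w => tr (I w rho))) (tr rho)).

(* outcome set J u {?}  modelled as option J, with None = ? *)
Definition uud_measurement (K : set nat) (J : countType) (rho : J -> mat)
    (I : option J -> op) : Prop :=
  instrument K I /\
  (forall j k : J, j <> k -> tr (I (Some j) (rho k)) = 0) /\
  (exists c : R, 0 < c /\ forall j, c%:C%C <= tr (I (Some j) (rho j))).

Definition uniformly_distinguishable (K : set nat) (J : countType)
    (rho : J -> mat) : Prop :=
  exists I : option J -> op, uud_measurement K rho I.

(* success probabilities tr[I_j rho_j] (real for these measurements) *)
Definition success (J : countType) (rho : J -> mat) (I : option J -> op)
  : J -> R := fun j => complex.Re (tr (I (Some j) (rho j))).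

Definition evaluation_function (J : countType) (f : (J -> R) -> R) : Prop :=
  forall x y : J -> R,
    (forall j, 0 < x j <= 1) -> (forall j, 0 < y j <= 1) ->
    (exists c : R, 0 < c /\ forall j, c <= x j - y j) ->
    0 < f x - f y.

Definition optimal_uud (K : set nat) (J : countType) (rho : J -> mat)
    (f : (J -> R) -> R) (I : option J -> op) : Prop :=
  uud_measurement K rho I /\
  ~ (exists I' : option J -> op, uud_measurement K rho I' /\
       f (success rho I') > f (success rho I)).

End QuantumDefs.

From mathcomp Require Import all_boot all_order all_algebra.
From mathcomp Require Import all_classical all_reals all_analysis.
From mathcomp Require Import complex ring.
Import Order.TTheory GRing.Theory Num.Theory.
Local Open Scope ring_scope.

(* If the post-measurement states sigma_j = I_? rho_j / tr[I_? rho_j] were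
   uniformly distinguishable by some I', one could do better than I: measure
   with I and, on the inconclusive outcome, measure the output with I'.  The
   unambiguity of I leaves only the outcomes j and ? in the trace-preservation
   series of rho_j, so tr[I_? rho_j] = 1 - p_j where p_j = tr[I_j rho_j] <= c < 1.
   The combined instrument is again a uniform unambiguous discrimination
   measurement, with success probabilities p_j + (1 - p_j) q_j, where
   q_j = tr[I'_j sigma_j] >= c' > 0; these exceed the p_j by at least (1 - c) c'
   uniformly in j, so an evaluation function prefers it to I, contradicting
   optimality.
   That the combination is an instrument rests on the trace being linear on
   trace-class operators (the diagonal of a nuclear operator is absolutely
   summable, by Cauchy-Schwarz) and on trace-class operators being closed under
   sums (interleave two nuclear representations). *)

Section UnambiguousDiscrimination.
Set Implicit Arguments. Unset Strict Implicit. Unset Printing Implicit Defensive.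
Local Open Scope classical_set_scope.

Section RealSeries.
Variable R : realType.
Implicit Types (u v : nat -> R) (a b s M : R).

Lemma rsum_eq u s : rseries_to u s -> rsum u = s.
Proof. exact: cvg_lim. Qed.

Lemma rseries_toD u v a b : rseries_to u a -> rseries_to v b ->
  rseries_to (fun n => u n + v n) (a + b).
Proof. by move=> hu hv; rewrite /rseries_to; under eq_fun do rewrite big_split; exact: cvgD. Qed.

Lemma rseries_toZ k u a : rseries_to u a -> rseries_to (fun n => k * u n) (k * a).
Proof. by move=> hu; rewrite /rseries_to; under eq_fun do rewrite -mulr_sumr; exact: cvgMr. Qed.

Lemma rseries_to_delta n0 a : rseries_to (fun n => if n == n0 then a else 0) a.
Proof.
apply: cvg_near_cst; exists n0.+1 => // N /= ltn0N.
by rewrite -big_mkcond big_nat1_eq leq0n ltn0N.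
Qed.

Lemma series_ge0 u N : (forall n, 0 <= u n) -> 0 <= series u N.
Proof. by move=> u0; apply: sumr_ge0. Qed.

Lemma series_le_rseries u s N : (forall n, 0 <= u n) -> rseries_to u s ->
  series u N <= s.
Proof.
move=> u0 us; rewrite -(rsum_eq us).
exact: nondecreasing_cvgn_le (nondecreasing_series (P := xpredT) _) (cvgP _ us) N.
Qed.

Lemma rseries_ge0 u s : (forall n, 0 <= u n) -> rseries_to u s -> 0 <= s.
Proof. by move=> u0 us; apply: le_trans (series_le_rseries 0 u0 us); exact: series_ge0. Qed.

Lemma term_le_rseries u s k : (forall n, 0 <= u n) -> rseries_to u s -> u k <= s.
Proof.
move=> u0 us; apply: le_trans (series_le_rseries k.+1 u0 us).
by rewrite seriesSr lerDr series_ge0.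
Qed.

Lemma rseries_to_rsum_ge0 u M : (forall n, 0 <= u n) ->
  (forall N, series u N <= M) -> rseries_to u (rsum u).
Proof.
move=> u0 uM; apply: nondecreasing_is_cvgn; first exact: nondecreasing_series.
by exists M => _ [N _ <-]; apply: uM.
Qed.

Lemma rseries_to_rsum_abs u M : (forall N, series (fun n => `|u n|) N <= M) ->
  rseries_to u (rsum u).
Proof.
move=> uM; apply: (@normed_cvg R R^o).
by apply: rseries_to_rsum_ge0 uM => n.
Qed.

Lemma half_cvgn : (fun n => n./2) @ \oo --> \oo.
Proof.
by move=> P [N _ PN]; exists N.*2 => // n /= le_N2n; apply: PN; rewrite /= geq_half_double.
Qed.

Lemma uphalf_cvgn : uphalf @ \oo --> \oo.
Proof.
move=> P [N _ PN]; exists N.*2 => // n /= le_N2n; apply: PN.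
by rewrite /= geq_uphalf_double ltnW.
Qed.

Definition interleave (T : Type) (p q : nat -> T) (k : nat) : T :=
  if odd k then q k./2 else p k./2.

Lemma interleave_map (T U : Type) (F : T -> U) p q k :
  F (interleave p q k) = interleave (F \o p) (F \o q) k.
Proof. by rewrite /interleave; case: odd. Qed.

Lemma interleave_map2 (T U V : Type) (F : T -> U -> V) p q p' q' k :
  F (interleave p q k) (interleave p' q' k) =
  interleave (fun n => F (p n) (p' n)) (fun n => F (q n) (q' n)) k.
Proof. by rewrite /interleave; case: odd. Qed.

Lemma sum_interleave u v N : \sum_(0 <= k < N) interleave u v k =
  \sum_(0 <= n < uphalf N) u n + \sum_(0 <= n < N./2) v n.
Proof.
elim: N => [|N IH]; first by rewrite !big_geq // addr0.
rewrite big_nat_recr //= IH /interleave uphalf_half.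
by case: (odd N); rewrite /= ?add1n ?add0n !big_nat_recr //=; ring.
Qed.

Lemma rseries_to_interleave u v a b : rseries_to u a -> rseries_to v b ->
  rseries_to (interleave u v) (a + b).
Proof.
move=> ua vb; rewrite /rseries_to; under eq_fun do rewrite sum_interleave.
exact: cvgD (cvg_comp _ _ uphalf_cvgn ua) (cvg_comp _ _ half_cvgn vb).
Qed.

End RealSeries.

Lemma sum_mul_sqr_le (R : realFieldType) (I : Type) (r : seq I) (a b : I -> R) :
  (\sum_(i <- r) a i * b i) ^+ 2 <=
  (\sum_(i <- r) a i ^+ 2) * (\sum_(i <- r) b i ^+ 2).
Proof.
have lagrange : \sum_(i <- r) \sum_(j <- r) (a i * b j - a j * b i) ^+ 2 =
    ((\sum_(i <- r) a i ^+ 2) * (\sum_(i <- r) b i ^+ 2)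
     - (\sum_(i <- r) a i * b i) ^+ 2) *+ 2.
  rewrite expr2 !big_distrlr /= mulr2n.
  rewrite [X in _ = _ + (X - _)]exchange_big [X in _ = _ + (_ - X)]exchange_big /=.
  rewrite -!sumrB -big_split /=; apply: eq_bigr => i _.
  by rewrite -!sumrB -big_split /=; apply: eq_bigr => j _; ring.
rewrite -subr_ge0 -(pmulrn_lge0 _ (ltn0Sn 1)) -lagrange.
by do 2!apply: sumr_ge0 => ? _; apply: sqr_ge0.
Qed.

Section ComplexSeries.
Variable R : realType.
Local Notation C := R[i].
Local Notation Re := complex.Re.
Local Notation Im := complex.Im.
Local Open Scope complex_scope.
Implicit Types (z w c s t : C) (p q : nat -> C).

Lemma ReD z w : Re (z + w) = Re z + Re w.
Proof. exact: raddfD. Qed.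

Lemma ImD z w : Im (z + w) = Im z + Im w.
Proof. exact: raddfD. Qed.

Lemma ReM z w : Re (z * w) = Re z * Re w - Im z * Im w.
Proof. by case: z => ? ?; case: w => ? ?. Qed.

Lemma ImM z w : Im (z * w) = Re z * Im w + Im z * Re w.
Proof. by case: z => ? ?; case: w => ? ? /=; rewrite addrC. Qed.

Lemma Re_realM (r : R) z : Re (r%:C * z) = r * Re z.
Proof. by rewrite ReM /= mul0r subr0. Qed.

Lemma cabs_normc z : cabs z = ComplexField.Normc.normc z.
Proof. by case: z. Qed.

Lemma cabs_ge0 z : 0 <= cabs z.
Proof. exact: sqrtr_ge0. Qed.

Lemma cabs0 : cabs (0 : C) = 0.
Proof. by rewrite cabs_normc ComplexField.Normc.normc0. Qed.

Lemma cabsN z : cabs (- z) = cabs z.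
Proof. by rewrite !cabs_normc normcN. Qed.

Lemma cabsD z w : cabs (z + w) <= cabs z + cabs w.
Proof. by rewrite !cabs_normc le_normcD. Qed.

Lemma cabsM z w : cabs (z * w) = cabs z * cabs w.
Proof. by rewrite !cabs_normc ComplexField.Normc.normcM. Qed.

Lemma cabs_conjc z : cabs z^*%C = cabs z.
Proof. by case: z => x y; rewrite /cabs /= sqrrN. Qed.

Lemma Re_le_cabs z : `|Re z| <= cabs z.
Proof.
case: z => x y; rewrite /cabs /= -sqrtr_sqr ler_sqrt ?addr_ge0 ?sqr_ge0 //.
by rewrite lerDl sqr_ge0.
Qed.

Lemma Im_le_cabs z : `|Im z| <= cabs z.
Proof.
case: z => x y; rewrite /cabs /= -sqrtr_sqr ler_sqrt ?addr_ge0 ?sqr_ge0 //.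
by rewrite lerDr sqr_ge0.
Qed.

Lemma csum_eq p s : cseries_to p s -> csum p = s.
Proof. by case: s => a b [/rsum_eq ha /rsum_eq hb]; rewrite /csum ha hb. Qed.

Lemma cseries_toD p q s t : cseries_to p s -> cseries_to q t ->
  cseries_to (fun n => p n + q n) (s + t).
Proof.
case=> ps1 ps2 [qt1 qt2]; split.
  by rewrite ReD; under eq_fun do rewrite ReD; exact: rseries_toD.
by rewrite ImD; under eq_fun do rewrite ImD; exact: rseries_toD.
Qed.

Lemma cseries_toZ c p s : cseries_to p s -> cseries_to (fun n => c * p n) (c * s).
Proof.
case=> ps1 ps2; split.
  rewrite ReM -mulNr; under eq_fun do rewrite ReM -mulNr.
  exact (rseries_toD (rseries_toZ ps1) (rseries_toZ ps2)).
rewrite ImM; under eq_fun do rewrite ImM.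
exact (rseries_toD (rseries_toZ ps2) (rseries_toZ ps1)).
Qed.

Lemma cseries_toN p s : cseries_to p s -> cseries_to (fun n => - p n) (- s).
Proof.
move=> /(cseries_toZ (-1)); rewrite mulN1r.
by under eq_fun do rewrite mulN1r.
Qed.

Lemma cseries_to_delta n0 z : cseries_to (fun n => if n == n0 then z else 0) z.
Proof.
split.
  by under eq_fun do rewrite (fun_if (@complex.Re R)); exact: rseries_to_delta.
by under eq_fun do rewrite (fun_if (@complex.Im R)); exact: rseries_to_delta.
Qed.

Lemma cseries_to_interleave p q s t : cseries_to p s -> cseries_to q t ->
  cseries_to (interleave p q) (s + t).
Proof.
case=> ps1 ps2 [qt1 qt2]; split; rewrite ?ReD ?ImD.
  by under eq_fun do rewrite (interleave_map (@complex.Re R)); exact: rseries_to_interleave.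
by under eq_fun do rewrite (interleave_map (@complex.Im R)); exact: rseries_to_interleave.
Qed.

End ComplexSeries.

Section TraceClass.
Variables (R : realType) (K : set nat).
Local Notation C := R[i].
Local Notation Re := complex.Re.
Local Open Scope complex_scope.
Implicit Types (v w : vec R) (A B : mat R) (x y : nat -> vec R).

Lemma l2norm_ge0 v : 0 <= l2norm v.
Proof. exact: sqrtr_ge0. Qed.

Lemma sum_sqr_le_l2norm v N : in_l2 K v ->
  \sum_(0 <= i < N) cabs (v i) ^+ 2 <= l2norm v ^+ 2.
Proof.
case=> _ [M vM]; have sqr0 i : 0 <= cabs (v i) ^+ 2 by exact: sqr_ge0.
have vv := rseries_to_rsum_ge0 sqr0 vM.
rewrite /l2norm sqr_sqrtr; last exact: rseries_ge0 sqr0 vv.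
exact: series_le_rseries.
Qed.

Lemma sum_cabsM_le_l2norm v w N : in_l2 K v -> in_l2 K w ->
  \sum_(0 <= i < N) cabs (v i) * cabs (w i) <= l2norm v * l2norm w.
Proof.
move=> lv lw; rewrite -(@ler_pXn2r _ 2) // ?nnegrE ?mulr_ge0 ?l2norm_ge0 //; last first.
  by apply: sumr_ge0 => i _; rewrite mulr_ge0 ?cabs_ge0.
apply: le_trans (sum_mul_sqr_le _ _ _) _.
by rewrite exprMn ler_pM ?sum_sqr_le_l2norm //; apply: sumr_ge0 => i _; apply: sqr_ge0.
Qed.

Lemma nuclear_diag_series_le A x y M (F : C -> R) :
    (forall n, in_l2 K (x n)) -> (forall n, in_l2 K (y n)) ->
    (forall N, \sum_(0 <= n < N) l2norm (x n) * l2norm (y n) <= M) ->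
    (forall z, `|F z| <= cabs z) ->
    (forall i, rseries_to (fun n => F (x n i * (y n i)^*)) (F (A i i))) ->
  forall N, series (fun i => `|F (A i i)|) N <= M.
Proof.
move=> lx ly xyM F_le FA N.
apply: cvgr_to_le (cvg_big add_continuous _ (fun i _ => cvg_norm (FA i))) _.
apply: nearW => m; apply: le_trans (xyM m).
apply: (@le_trans _ _ (\sum_(0 <= i < N) \sum_(0 <= n < m) cabs (x n i) * cabs (y n i))).
  apply: ler_sum => i _; apply: le_trans (ler_norm_sum _ _ _) _.
  by apply: ler_sum => n _; rewrite (le_trans (F_le _)) // cabsM cabs_conjc.
rewrite exchange_big_nat; apply: ler_sum => n _; exact: sum_cabsM_le_l2norm.
Qed.

Lemma trace_class_diag A : trace_class K A -> cseries_to (fun i => A i i) (tr A).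
Proof.
case=> x [y [lx [ly [[M xyM] xyA]]]].
split; apply: (@rseries_to_rsum_abs _ _ M); apply: (nuclear_diag_series_le lx ly xyM).
- exact: Re_le_cabs.
- by move=> i; case: (xyA i i).
- exact: Im_le_cabs.
- by move=> i; case: (xyA i i).
Qed.

Lemma trD A B : trace_class K A -> trace_class K B ->
  tr (opadd A B) = tr A + tr B.
Proof.
by move=> /trace_class_diag dA /trace_class_diag dB; exact/csum_eq/cseries_toD.
Qed.

Lemma trZ c A : trace_class K A -> tr (opscale c A) = c * tr A.
Proof. by move=> /trace_class_diag dA; exact/csum_eq/cseries_toZ. Qed.

Lemma positive_op_diag A i : positive_op A -> 0 <= A i i.
Proof.
have last_only (F : nat -> C) : (forall k, (k < i)%N -> F k = 0) ->
    \sum_(0 <= k < i.+1) F k = F i.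
  move=> F0; rewrite big_nat_recr //= big_nat_cond big1 ?add0r //.
  by move=> k /andP[/andP[_ /F0]].
move=> /(_ i.+1 (fun k => if k == i then 1 else 0)).
rewrite last_only => [|k /ltn_eqF->]; last by rewrite conjc0 big1 // => l _; rewrite !mul0r.
rewrite last_only => [|l /ltn_eqF->]; last by rewrite mulr0.
by rewrite eqxx conjc1 mul1r mulr1.
Qed.

Lemma Re_tr_ge0 A : positive_op A -> trace_class K A -> 0 <= Re (tr A).
Proof.
move=> pA /trace_class_diag[dA _]; apply: rseries_ge0 dA => i.
by have := positive_op_diag i pA; rewrite lecE => /andP[].
Qed.

Definition nuclear_norm x y := rsum (fun n => l2norm (x n) * l2norm (y n)).

Lemma nuclear_normE A x y : nuclear_rep K A x y ->
  rseries_to (fun n => l2norm (x n) * l2norm (y n)) (nuclear_norm x y).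
Proof.
case=> _ [_ [[M xyM] _]]; apply: (rseries_to_rsum_ge0 _ xyM) => n.
by rewrite mulr_ge0 ?l2norm_ge0.
Qed.

Lemma nuclear_norm_ge0 A x y : nuclear_rep K A x y -> 0 <= nuclear_norm x y.
Proof. by move/nuclear_normE; apply: rseries_ge0 => n; rewrite mulr_ge0 ?l2norm_ge0. Qed.

Let nuclear_norms A := [set t | exists x y, nuclear_rep K A x y /\ t = nuclear_norm x y].

Lemma nuclear_norms_has_inf A : trace_class K A -> has_inf (nuclear_norms A).
Proof.
case=> x [y xyA]; split; first by exists (nuclear_norm x y), x, y.
by exists 0 => _ [x' [y' [xyA' ->]]]; exact: nuclear_norm_ge0 xyA'.
Qed.

Lemma trace_norm_ge0 A : trace_class K A -> 0 <= trace_norm K A.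
Proof.
move=> /nuclear_norms_has_inf[ne _]; apply: lb_le_inf ne _.
by move=> _ [x [y [xyA ->]]]; exact: nuclear_norm_ge0 xyA.
Qed.

Lemma trace_norm_le A x y : nuclear_rep K A x y -> trace_norm K A <= nuclear_norm x y.
Proof.
move=> xyA; apply: ge_inf; last by exists x, y.
by case: (nuclear_norms_has_inf (ex_intro _ x (ex_intro _ y xyA))).
Qed.

Lemma nuclear_repD A B x y x' y' :
    nuclear_rep K A x y -> nuclear_rep K B x' y' ->
  nuclear_rep K (opadd A B) (interleave x x') (interleave y y') /\
  nuclear_norm (interleave x x') (interleave y y') = nuclear_norm x y + nuclear_norm x' y'.
Proof.
move=> xyA x'y'B; have xyN := nuclear_normE xyA; have x'y'N := nuclear_normE x'y'B.
move: xyA x'y'B => [lx [ly [[M xyM] xyA]]] [lx' [ly' [[M' x'y'M] x'y'B]]].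
have normsE n : l2norm (interleave x x' n) * l2norm (interleave y y' n) =
    interleave (fun n => l2norm (x n) * l2norm (y n))
               (fun n => l2norm (x' n) * l2norm (y' n)) n.
  exact: (interleave_map2 (fun v w => l2norm v * l2norm w)).
split; last by rewrite /nuclear_norm; under eq_fun do rewrite normsE;
  exact: rsum_eq (rseries_to_interleave xyN x'y'N).
split; first by move=> n; rewrite /interleave; case: odd.
split; first by move=> n; rewrite /interleave; case: odd.
split.
  exists (M + M') => N; under eq_bigr do rewrite normsE.
  by rewrite sum_interleave lerD.
move=> i j; under eq_fun do rewrite (interleave_map2 (fun v w => v i * (w j)^*)).
exact: cseries_to_interleave (xyA i j) (x'y'B i j).
Qed.

Lemma trace_classD A B : trace_class K A -> trace_class K B -> trace_class K (opadd A B).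
Proof.
move=> [x [y xyA]] [x' [y' x'y'B]].
by exists (interleave x x'), (interleave y y'); case: (nuclear_repD xyA x'y'B).
Qed.

Lemma trace_normD A B : trace_class K A -> trace_class K B ->
  trace_norm K (opadd A B) <= trace_norm K A + trace_norm K B.
Proof.
move=> tcA tcB; apply/ler_addgt0Pr => e e_gt0.
have e2_gt0 : 0 < e / 2 by rewrite divr_gt0.
have [_ [x [y [xyA ->]]] ltA] := inf_adherent e2_gt0 (nuclear_norms_has_inf tcA).
have [_ [x' [y' [x'y'B ->]]] ltB] := inf_adherent e2_gt0 (nuclear_norms_has_inf tcB).
have [xyAB normD] := nuclear_repD xyA x'y'B.
apply: le_trans (trace_norm_le xyAB) _.
rewrite normD [e]splitr addrACA; exact: lerD (ltW ltA) (ltW ltB).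
Qed.

Lemma in_l2Z c v : in_l2 K v ->
  in_l2 K (fun i => c * v i) /\ l2norm (fun i => c * v i) = cabs c * l2norm v.
Proof.
case=> v0 [M vM]; have sqr0 i : 0 <= cabs (v i) ^+ 2 by exact: sqr_ge0.
have sqrE i : cabs (c * v i) ^+ 2 = cabs c ^+ 2 * cabs (v i) ^+ 2.
  by rewrite cabsM exprMn.
split.
  split; first by move=> i /v0->; rewrite mulr0.
  exists (cabs c ^+ 2 * M) => N; under eq_bigr do rewrite sqrE.
  by rewrite -mulr_sumr ler_wpM2l ?sqr_ge0.
rewrite /l2norm; under eq_fun do rewrite sqrE.
rewrite (rsum_eq (rseries_toZ (rseries_to_rsum_ge0 sqr0 vM))).
by rewrite sqrtrM ?sqr_ge0 // sqrtr_sqr ger0_norm ?cabs_ge0.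
Qed.

Lemma trace_classZ c A : trace_class K A -> trace_class K (opscale c A).
Proof.
case=> x [y [lx [ly [[M xyM] xyA]]]].
exists (fun n i => c * x n i), y; split; first by move=> n; case: (in_l2Z c (lx n)).
split=> //; split.
  exists (cabs c * M) => N; under eq_bigr do rewrite (in_l2Z c (lx _)).2 -mulrA.
  by rewrite -mulr_sumr ler_wpM2l ?cabs_ge0.
move=> i j; have := cseries_toZ c (xyA i j).
by under eq_fun do rewrite mulrA.
Qed.

End TraceClass.

Section CompletelyPositiveMaps.
Variables (R : realType) (K : set nat).
Implicit Types (A : mat R) (I : op R).

Lemma cp_map_positive I A : bounded_cp_map K I -> trace_class K A ->
  positive_op A -> positive_op (I A).
Proof.
move=> [_ [_ [_ [_ cpI]]]] tcA pA N v.
have := cpI 1%N (fun _ _ => A) (fun _ _ => tcA) _ N (fun _ => v).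
by rewrite !big_ord1; apply => M w; rewrite !big_ord1.
Qed.

Lemma positive_blockD n (B1 B2 : 'I_n -> 'I_n -> mat R) :
  positive_block B1 -> positive_block B2 ->
  positive_block (fun a b => opadd (B1 a b) (B2 a b)).
Proof.
move=> pB1 pB2 N v; apply: le_trans (addr_ge0 (pB1 N v) (pB2 N v)) _.
do 4!(rewrite -big_split; apply: ler_sum => ? _).
by rewrite /opadd mulrDr mulrDl.
Qed.

Lemma bounded_cp_map_bound I : bounded_cp_map K I ->
  exists2 c, 0 <= c & forall A, trace_class K A ->
    trace_norm K (I A) <= c * trace_norm K A.
Proof.
case=> _ [_ [_ [[c Ic] _]]]; exists (Num.max c 0) => [|A tcA]; first by rewrite le_max lexx orbT.
by apply: le_trans (Ic A tcA) _; rewrite ler_wpM2r ?trace_norm_ge0 ?le_max ?lexx.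
Qed.

Lemma bounded_cp_map_comp I1 I2 : bounded_cp_map K I1 -> bounded_cp_map K I2 ->
  bounded_cp_map K (fun A => I2 (I1 A)).
Proof.
move=> b1 b2; have [c1 c1_ge0 Ic1] := bounded_cp_map_bound b1.
have [c2 c2_ge0 Ic2] := bounded_cp_map_bound b2.
move: b1 b2 => [tc1 [add1 [scale1 [_ cp1]]]] [tc2 [add2 [scale2 [_ cp2]]]].
split; first by move=> A /tc1/tc2.
split; first by move=> A B tcA tcB; rewrite add1 // add2 //; apply: tc1.
split; first by move=> c A tcA; rewrite scale1 // scale2 //; apply: tc1.
split.
  exists (c2 * c1) => A tcA; apply: le_trans (Ic2 _ (tc1 _ tcA)) _.
  by rewrite -mulrA ler_wpM2l ?Ic1.
move=> n B tcB pB; apply: cp2; last exact: cp1.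
by move=> a b; apply: tc1.
Qed.

Lemma bounded_cp_mapD I1 I2 : bounded_cp_map K I1 -> bounded_cp_map K I2 ->
  bounded_cp_map K (fun A => opadd (I1 A) (I2 A)).
Proof.
move=> b1 b2; have [c1 c1_ge0 Ic1] := bounded_cp_map_bound b1.
have [c2 c2_ge0 Ic2] := bounded_cp_map_bound b2.
move: b1 b2 => [tc1 [add1 [scale1 [_ cp1]]]] [tc2 [add2 [scale2 [_ cp2]]]].
split; first by move=> A tcA; apply: trace_classD; [apply: tc1 | apply: tc2].
split.
  move=> A B tcA tcB; rewrite add1 // add2 //.
  by apply/funext => i; apply/funext => j; rewrite /opadd addrACA.
split.
  move=> c A tcA; rewrite scale1 // scale2 //.
  by apply/funext => i; apply/funext => j; rewrite /opadd /opscale mulrDr.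
split.
  exists (c1 + c2) => A tcA; apply: le_trans (trace_normD (tc1 _ tcA) (tc2 _ tcA)) _.
  by rewrite mulrDl; apply: lerD; [exact: Ic1 | exact: Ic2].
by move=> n B tcB pB; apply: positive_blockD; [apply: cp1 | apply: cp2].
Qed.

End CompletelyPositiveMaps.

Section Enumeration.
Variables (R : realType) (W : countType).
Implicit Types (g h : W -> R[i]) (w : W) (n : nat).

Lemma enum_seq_pickle g w : enum_seq g (pickle w) = g w.
Proof. by rewrite /enum_seq pickleK_inv. Qed.

Lemma enum_seqD g h n : enum_seq (fun w => g w + h w) n = enum_seq g n + enum_seq h n.
Proof. by rewrite /enum_seq; case: pickle_inv => // ; rewrite addr0. Qed.

Lemma enum_seqN g n : enum_seq (fun w => - g w) n = - enum_seq g n.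
Proof. by rewrite /enum_seq; case: pickle_inv => //; rewrite oppr0. Qed.

Lemma enum_seq_delta w0 (a : R[i]) n :
  enum_seq (fun w => if w == w0 then a else 0) n = if n == pickle w0 then a else 0.
Proof.
rewrite /enum_seq; case E: pickle_inv => [w|].
  by rewrite -(@pickle_invK W n) E /= (inj_eq (pcan_inj pickleK_inv)).
by case: eqP E => // ->; rewrite pickleK_inv.
Qed.

Lemma cseries_to_enum_seq2 g w1 w2 : w1 != w2 ->
    (forall w, w != w1 -> w != w2 -> g w = 0) ->
  cseries_to (enum_seq g) (g w1 + g w2).
Proof.
move=> w12 g0.
have -> : enum_seq g = fun n =>
    (if n == pickle w1 then g w1 else 0) + (if n == pickle w2 then g w2 else 0).
  apply/funext => n; rewrite -!enum_seq_delta -enum_seqD; congr enum_seq.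
  apply/funext => w; have [->|w1'] := eqVneq w w1; first by rewrite (negPf w12) addr0.
  by rewrite add0r; have [->|w2'] := eqVneq w w2; last exact: g0.
exact: cseries_toD (cseries_to_delta _ _) (cseries_to_delta _ _).
Qed.

End Enumeration.

Section Instruments.
Variables (R : realType) (K : set nat).
Local Notation Re := complex.Re.

Lemma instrument_Re_tr_le (W : countType) (I : W -> op R) w X :
  instrument K I -> trace_class K X -> positive_op X ->
  Re (tr (I w X)) <= Re (tr X).
Proof.
move=> [bI trI] tcX pX; have [_ [trIX _]] := trI X tcX.
rewrite -(enum_seq_pickle (fun w => tr (I w X))).
apply: term_le_rseries trIX => n; rewrite /enum_seq; case: pickle_inv => // w'.
exact: Re_tr_ge0 (cp_map_positive (bI w') tcX pX) ((bI w').1 X tcX).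
Qed.

Variables (J : countType) (I I' : option J -> op R).

Definition retry_inconclusive : option J -> op R := fun w =>
  match w with
  | Some j => fun X => opadd (I (Some j) X) (I' (Some j) (I None X))
  | None => fun X => I' None (I None X)
  end.

Hypotheses (instI : instrument K I) (instI' : instrument K I').

Lemma tr_retry_Some j X : trace_class K X ->
  tr (retry_inconclusive (Some j) X) = tr (I (Some j) X) + tr (I' (Some j) (I None X)).
Proof.
move=> tcX; apply: trD; first exact: (instI.1 _).1.
exact/(instI'.1 _).1/(instI.1 _).1.
Qed.

Lemma instrument_retry : instrument K retry_inconclusive.
Proof.
have [bI trI] := instI; have [bI' trI'] := instI'.
split=> [[j|]|X tcX].
- exact: bounded_cp_mapD (bI _) (bounded_cp_map_comp (bI None) (bI' _)).
- exact: bounded_cp_map_comp.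
have [[M1 M1_bound] cv1] := trI X tcX.
have [[M2 M2_bound] cv2] := trI' _ ((bI None).1 X tcX).
set t := tr (I None X).
set delta := fun n => if n == pickle (None : option J) then t else 0.
have -> : enum_seq (fun w => tr (retry_inconclusive w X)) = fun n =>
    enum_seq (fun w => tr (I w X)) n - delta n + enum_seq (fun w => tr (I' w (I None X))) n.
  apply/funext => n; rewrite /delta -enum_seq_delta -enum_seqN -!enum_seqD; congr enum_seq.
  by apply/funext => -[j|] /=; rewrite ?subr0 ?tr_retry_Some // subrr add0r.
split; last first.
  rewrite -[tr X](subrK t).
  exact: cseries_toD (cseries_toD cv1 (cseries_toN (cseries_to_delta _ t))) cv2.
have delta_bound N : \sum_(0 <= n < N) cabs (delta n) <= cabs t.
  under eq_bigr do rewrite (fun_if (@cabs R)) cabs0.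
  by rewrite -big_mkcond big_nat1_eq; case: ifP; rewrite ?cabs_ge0.
exists (M1 + cabs t + M2) => N.
apply: (@le_trans _ _ (\sum_(0 <= n < N) (cabs (enum_seq (fun w => tr (I w X)) n)
    + cabs (delta n) + cabs (enum_seq (fun w => tr (I' w (I None X))) n)))).
  apply: ler_sum => n _; rewrite -(cabsN (delta n)).
  by apply: le_trans (cabsD _ _) _; rewrite lerD2r cabsD.
by rewrite !big_split /= !lerD.
Qed.

End Instruments.

Section UnambiguousMeasurements.
Variables (R : realType) (K : set nat) (J : countType).
Variables (rho : J -> mat R) (I : option J -> op R).
Hypothesis uudI : uud_measurement K rho I.
Local Open Scope complex_scope.

Lemma uud_trE j : tr (I (Some j) (rho j)) = (success rho I j)%:C.
Proof.
have [_ [_ [c [_ c_le]]]] := uudI; move: (c_le j); rewrite /success lecE.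
by case: (tr _) => a b /= /andP[/eqP->].
Qed.

Lemma uud_success_lbound : exists2 c, 0 < c & forall j, c <= success rho I j.
Proof.
have [_ [_ [c [c_gt0 c_le]]]] := uudI; exists c => // j.
by move: (c_le j); rewrite uud_trE lecR.
Qed.

Hypothesis dens : forall j, density K (rho j).

Lemma tr_inconclusive j : tr (I None (rho j)) = (1 - success rho I j)%:C.
Proof.
have [[_ trI] [orthI _]] := uudI; have [tc_rho [_ tr_rho]] := dens j.
have trI_sum : tr (I (Some j) (rho j)) + tr (I None (rho j)) = 1.
  rewrite -tr_rho -(csum_eq (trI _ tc_rho).2); apply/esym/csum_eq.
  apply: (cseries_to_enum_seq2 (g := fun w => tr (I w (rho j)))) => // -[k kj _|//].
  by apply: orthI => kj'; rewrite kj' eqxx in kj.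
apply: (@addrI _ (tr (I (Some j) (rho j)))); rewrite trI_sum uud_trE.
by rewrite -rmorphD addrC subrK rmorph1.
Qed.

Definition inconclusive_states (j : J) : mat R :=
  opscale (tr (I None (rho j)))^-1 (I None (rho j)).

End UnambiguousMeasurements.

Section RetryUnambiguous.
Variables (R : realType) (K : set nat) (J : countType).
Variables (rho : J -> mat R) (I I' : option J -> op R).
Hypotheses (dens : forall j, density K (rho j)) (uudI : uud_measurement K rho I).
Hypothesis instI' : instrument K I'.
Local Notation sigma := (inconclusive_states rho I).
Local Notation retry := (retry_inconclusive I I').
Local Open Scope complex_scope.

Lemma tr_retry_Some_states j k : tr (I None (rho k)) != 0 ->
  tr (retry (Some j) (rho k)) =
  tr (I (Some j) (rho k)) + tr (I None (rho k)) * tr (I' (Some j) (sigma k)).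
Proof.
move=> t_neq0; have tc_out := (uudI.1.1 None).1 _ (dens k).1.
have sigmaK : opscale (tr (I None (rho k))) (sigma k) = I None (rho k).
  by apply/funext => a; apply/funext => b; rewrite /opscale mulrA mulfV ?mul1r.
have tc_sigma : trace_class K (sigma k) by exact: trace_classZ.
rewrite (tr_retry_Some uudI.1 instI' j (dens k).1) -(@trZ _ K); last exact: (instI'.1 _).1.
by rewrite -(instI'.1 _).2.2.1 ?sigmaK.
Qed.

Lemma uud_retry : uud_measurement K sigma I' ->
  (forall j, 0 < tr (I None (rho j))) -> uud_measurement K rho retry.
Proof.
move=> uudI' t_gt0; have t_neq0 j := lt0r_neq0 (t_gt0 j).
have [_ [orthI [c [c_gt0 c_le]]]] := uudI; have [_ [orthI' [c' [c'_gt0 c'_le]]]] := uudI'.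
split; first exact: instrument_retry uudI.1 instI'.
split=> [j k jk|]; first by rewrite tr_retry_Some_states ?orthI ?orthI' ?mulr0 ?addr0.
exists c; split => // j; rewrite tr_retry_Some_states // -[c%:C]addr0 lerD ?c_le //.
by apply: mulr_ge0; [exact: ltW | apply: le_trans (c'_le j); rewrite ler0c ltW].
Qed.

Lemma success_retry j : tr (I None (rho j)) != 0 ->
  success rho retry j =
  success rho I j + (1 - success rho I j) * success sigma I' j.
Proof.
move=> t_neq0; rewrite /success tr_retry_Some_states // ReD.
by rewrite (tr_inconclusive uudI dens) Re_realM.
Qed.

Lemma success_retry_le1 j : success rho retry j <= 1.
Proof.
have [tc_rho [pos_rho tr_rho]] := dens j.
apply: le_trans (instrument_Re_tr_le (Some j) (instrument_retry uudI.1 instI') tc_rho pos_rho) _.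
by rewrite tr_rho.
Qed.

End RetryUnambiguous.

End UnambiguousDiscrimination.

Theorem mainTheorem2 (R : realType) (K : set nat) (J : countType)
    (rho : J -> mat R) (f : (J -> R) -> R) (I : option J -> op R) :
  (forall j, density K (rho j)) ->
  evaluation_function f ->
  optimal_uud K rho f I ->
  (* sup_j tr[I_j rho_j] < 1 *)
  (exists c : R, c < 1 /\ forall j, success rho I j <= c) ->
  ~ uniformly_distinguishable K
      (fun j => opscale ((tr (I None (rho j)))^-1) (I None (rho j))).
Proof.
move=> dens f_eval [uudI not_better] [c0 [c0_lt1 le_c0]] [I' uudI'].
have [c c_gt0 c_le] := uud_success_lbound uudI.
have [c' c'_gt0 c'_le] := uud_success_lbound uudI'.
have t_gt0 j : 0 < tr (I None (rho j)).
  by rewrite (tr_inconclusive uudI dens) ltcR subr_gt0 (le_lt_trans (le_c0 j)).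
have t_neq0 j := lt0r_neq0 (t_gt0 j).
have gain_gt0 : 0 < (1 - c0) * c' by rewrite mulr_gt0 ?subr_gt0.
have gain j : (1 - c0) * c' <=
    success rho (retry_inconclusive I I') j - success rho I j.
  rewrite (success_retry dens uudI uudI'.1 (t_neq0 j)) addrAC subrr add0r.
  apply: ler_pM; [by rewrite subr_ge0 ltW | exact: ltW | | exact: c'_le].
  by rewrite lerD2l lerN2.
apply: not_better; exists (retry_inconclusive I I').
split; first exact: uud_retry dens uudI uudI'.1 uudI' t_gt0.
rewrite -subr_gt0; apply: f_eval => [j|j|]; last by exists ((1 - c0) * c').
- rewrite (success_retry_le1 dens uudI uudI'.1) andbT.
  apply: lt_trans (lt_le_trans c_gt0 (c_le j)) _.
  by rewrite -subr_gt0 (lt_le_trans gain_gt0 (gain j)).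
- by rewrite (lt_le_trans c_gt0 (c_le j)) (le_trans (le_c0 j)) ?ltW.
Qed.
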